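(* Let $\rho_{i\to j}(e)$ be a subexpression of the clique-width $k$-expression $e_G$ and let $C,N\in[0,\mathcal{N}]^{k\times q}$. Let $N_e$ be defined by $N_e[i,a]=N[j,a]$ for every color $a$ and $N_e[h,a]=N[h,a]$ for every $h\in[1,k]\setminus\{i\}$ and every color $a$. If $C[i,a]=0$ for all $a\in\mathrm{Colors}$, then $\lambda(\rho_{i\to j}(e),C,N)$ equals the minimum of $\lambda(e,C_e,N_e)$ over all $C_e\in[0,\mathcal{N}]^{k\times q}$ such that $C[j,a]=\min(\mathcal{N},C_e[i,a]+C_e[j,a])$ for all colors $a$ and $C_e[h,a]=C[h,a]$ for all $h\in[1,k]\setminus\{i,j\}$ and all colors $a$. Otherwise, $\lambda(\rho_{i\to j}(e),C,N)=\mathrm{Error}$.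
   Context: Weight set: $(\mathrm{Weights},\preceq,\circledast)$ where $\preceq$ is a total order with a maximum element $\mathrm{Error}$, $\min$ is the minimum w.r.t. $\preceq$ (minimum of an empty set is $\mathrm{Error}$), and $\circledast$ is commutative, associative, has a neutral element, has absorbing element $\mathrm{Error}$, and is monotone. A color-counting 1-locally checkable problem is given by a graph $G$, colors $\mathrm{Colors}=\{a_1,\ldots,a_q\}$, nonempty lists $L_v\subseteq\mathrm{Colors}$, weights $w_{v,a}\in\mathrm{Weights}\setminus\{\mathrm{Error}\}$ ($a\in L_v$), and a function $check(v,a,n_1,\ldots,n_q)\in\{\mathrm{True},\mathrm{False}\}$. $\mathcal{N}\in[1,|V(G)|]$ is an integer with $check(v,a,n_1,\ldots,n_q)=check(v,a,\min(\mathcal{N},n_1),\ldots,\min(\mathcal{N},n_q))$ always. $[x,y]=\{x,\ldots,y\}$. $e_G$ is an irredundant clique-width $k$-expression of $G$ (operations $i(v)$, $\oplus$, $\eta_{i,j}$, $\rho_{i\to j}$ renaming label $i$ to $j$; irredundant means no join adds an already existing edge), in which every relabeling $\rho_{i\to j}(e)$ has some vertex of $G_e$ of label $j$. For a subexpression $e$, $G_e$ is its labeled graph and $\ell_e(v)$ the label of $v$ in $G_e$. For $C,N\in[0,\mathcal{N}]^{k\times q}$ (rows = labels, columns = colors), a coloring $c$ of $G_e$ with $c(v)\in L_v$ for all $v$ is a $(C,N)$-coloring of $G_e$ if (C1) $\min(\mathcal{N},|\{v\in V(G_e): c(v)=a,\ \ell_e(v)=i\}|)=C[i,a]$ for all $i,a$;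 and (C2) for all $v\in V(G_e)$, $check(v,c(v),n_1,\ldots,n_q)$ holds with $n_j=\min(\mathcal{N},N[\ell_e(v),a_j]+|\{u\in N_{G_e}(v):c(u)=a_j\}|)$. $\lambda(e,C,N)$ is the minimum of $\circledast_{v\in V(G_e)}w_{v,c(v)}$ over all $(C,N)$-colorings $c$ of $G_e$ ($\mathrm{Error}$ if none). *)

From HB Require Import structures.
From mathcomp Require Import all_boot all_order.
From mathcomp Require Import matrix.
Set Implicit Arguments. Unset Strict Implicit. Unset Printing Implicit Defensive.
Import Order.TTheory.

Definition is_weight_set (d : Order.disp_t) (W : orderType d)
    (Error : W) (op : W -> W -> W) (one : W) : Prop :=
  (forall x : W, (x <= Error)%O) /\
  [/\ commutative op, associative op,
      left_id one op,
      (forall x, op Error x = Error) &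
      (forall x y z : W, (x <= y)%O -> (op x z <= op y z)%O)].

Inductive cwexp (V : Type) (k : nat) : Type :=
  | CVert of 'I_k & V
  | CUnion of cwexp V k & cwexp V k
  | CJoin of 'I_k & 'I_k & cwexp V k
  | CRename of 'I_k & 'I_k & cwexp V k.

Arguments CVert {V k}.
Arguments CUnion {V k}.
Arguments CJoin {V k}.
Arguments CRename {V k}.

Section CW.
Variables (V : finType) (k : nat).

Fixpoint cw_verts (e : cwexp V k) : {set V} :=
  match e with
  | CVert _ v => [set v]
  | CUnion a b => cw_verts a :|: cw_verts b
  | CJoin _ _ a => cw_verts a
  | CRename _ _ a => cw_verts a
  end.

(* labelling l_e (meaningful on cw_verts e) *)
Fixpoint cw_label (e : cwexp V k) : V -> 'I_k :=
  match e with
  | CVert i _ => fun _ => i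
  | CUnion a b => fun u => if u \in cw_verts a then cw_label a u else cw_label b u
  | CJoin _ _ a => cw_label a
  | CRename i j a => fun u => if cw_label a u == i then j else cw_label a u
  end.

Fixpoint cw_edges (e : cwexp V k) : rel V :=
  match e with
  | CVert _ _ => fun _ _ => false
  | CUnion a b => fun u w => cw_edges a u w || cw_edges b u w
  | CJoin i j a => fun u w =>
      cw_edges a u w ||
      [&& u \in cw_verts a, w \in cw_verts a &
          ((cw_label a u == i) && (cw_label a w == j))
          || ((cw_label a u == j) && (cw_label a w == i))]
  | CRename _ _ a => cw_edges a
  end.

Fixpoint cw_wf (e : cwexp V k) : Prop :=
  match e with
  | CVert _ _ => True
  | CUnion a b => [/\ cw_wf a, cw_wf b & [disjoint cw_verts a & cw_verts b]]
  | CJoin i j a => i != j /\ cw_wf a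
  | CRename i j a => i != j /\ cw_wf a
  end.

Fixpoint cw_irredundant (e : cwexp V k) : Prop :=
  match e with
  | CVert _ _ => True
  | CUnion a b => cw_irredundant a /\ cw_irredundant b
  | CJoin i j a => cw_irredundant a /\
      (forall u w, u \in cw_verts a -> w \in cw_verts a ->
         cw_label a u = i -> cw_label a w = j -> ~~ cw_edges a u w)
  | CRename _ _ a => cw_irredundant a
  end.

Fixpoint cw_relabel_ok (e : cwexp V k) : Prop :=
  match e with
  | CVert _ _ => True
  | CUnion a b => cw_relabel_ok a /\ cw_relabel_ok b
  | CJoin _ _ a => cw_relabel_ok a
  | CRename _ j a => cw_relabel_ok a /\ exists2 v, v \in cw_verts a & cw_label a v = j
  end.

Inductive subexp : cwexp V k -> cwexp V k -> Prop :=
  | subexp_refl e : subexp e e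
  | subexp_unionl e a b : subexp e a -> subexp e (CUnion a b)
  | subexp_unionr e a b : subexp e b -> subexp e (CUnion a b)
  | subexp_join e i j a : subexp e a -> subexp e (CJoin i j a)
  | subexp_rename e i j a : subexp e a -> subexp e (CRename i j a).

Definition cw_expression_of (E : rel V) (e : cwexp V k) : Prop :=
  [/\ cw_wf e, cw_verts e = [set: V], (forall u w, cw_edges e u w = E u w),
      cw_irredundant e & cw_relabel_ok e].

End CW.

Section Problem.
Variables (d : Order.disp_t) (W : orderType d) (Error : W)
          (op : W -> W -> W) (one : W).
Variables (V : finType) (k q Nb : nat).
Variables (L : V -> {set 'I_q}) (w : V -> 'I_q -> W)
          (check : V -> 'I_q -> ('I_q -> nat) -> bool).

(* matrices in [0,Nb]^{k x q}: rows = labels, columns = colors *)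
Definition cmat := 'M['I_Nb.+1]_(k, q).

Definition is_CN_coloring (e : cwexp V k) (C N : cmat) (c : {ffun V -> 'I_q}) : bool :=
  [&& [forall v, (v \in cw_verts e) ==> (c v \in L v)],
      [forall i : 'I_k, forall a : 'I_q,
         minn Nb #|[set v in cw_verts e | (c v == a) && (cw_label e v == i)]|
         == C i a] &
      [forall v, (v \in cw_verts e) ==>
         check v (c v) (fun a =>
           minn Nb (N (cw_label e v) a +
                    #|[set u in cw_verts e | cw_edges e v u && (c u == a)]|))]].

Definition weight_of (e : cwexp V k) (c : {ffun V -> 'I_q}) : W :=
  \big[op/one]_(v in cw_verts e) w v (c v).

Definition lambda (e : cwexp V k) (C N : cmat) : W :=
  \big[Order.min/Error]_(c : {ffun V -> 'I_q} | is_CN_coloring e C N c)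
     weight_of e c.

End Problem.

From HB Require Import structures.
From mathcomp Require Import all_boot all_order.
From mathcomp Require Import matrix.
From mathcomp Require Import zify.
From Stdlib Require Import FunctionalExtensionality.
Import Order.TTheory.
Set Implicit Arguments. Unset Strict Implicit. Unset Printing Implicit Defensive.

(* A relabeling changes neither the vertices, the edges nor the coloring, only
   the labels.  Hence for a coloring c the count matrix of rho_{i->j}(e) arises
   from the count matrix C_e(c) of e by emptying row i and adding it (saturated
   at N) to row j, while the neighbourhood test of rho_{i->j}(e) against N is
   the test of e against N_e.  So c is a (C,N)-coloring of rho_{i->j}(e) iff
   row i of C vanishes, C_e(c) is compatible with C, and c is a
   (C_e(c),N_e)-coloring of e; as c determines C_e(c), the minimum over
   colorings regroups into a minimum over compatible C_e, and there is no
   coloring at all when row i of C is nonzero. *)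

Lemma subexp_wf (V : finType) k (e1 e2 : cwexp V k) :
  subexp e1 e2 -> cw_wf e2 -> cw_wf e1.
Proof. by elim=> //= > _ IH [] *; apply: IH. Qed.

Section BigMinCover.
Variables (d : Order.disp_t) (T : orderType d) (top : T).
Hypothesis le_top : forall t : T, (t <= top)%O.

Lemma bigmin_cover (I J : finType) (P : pred I) (Q : pred J)
    (R : J -> pred I) (F : I -> T) :
  (forall x, P x -> exists2 y, Q y & R y x) ->
  (forall y x, Q y -> R y x -> P x) ->
  \big[Order.min/top]_(x | P x) F x =
  \big[Order.min/top]_(y | Q y) \big[Order.min/top]_(x | R y x) F x.
Proof.
move=> coverP fiberP; apply/le_anti/andP; split.
  apply: le_bigmin => // y Qy; apply: le_bigmin => // x Ryx.
  exact: bigmin_le_cond (fiberP _ _ Qy Ryx).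
apply: le_bigmin => // x /coverP[y Qy Ryx].
exact: le_trans (bigmin_le_cond _ _ Qy) (bigmin_le_cond _ _ Ryx).
Qed.

End BigMinCover.

Section LabelCounts.
Variables (V : finType) (k q Nb : nat).
Implicit Types (e : cwexp V k) (c : {ffun V -> 'I_q}).

Definition label_count e c (h : 'I_k) (a : 'I_q) : nat :=
  #|[set v in cw_verts e | (c v == a) && (cw_label e v == h)]|.

Definition count_mx e c : 'M['I_Nb.+1]_(k, q) :=
  \matrix_(h, a) inord (minn Nb (label_count e c h a)).

Lemma count_mxE e c h a : count_mx e c h a = minn Nb (label_count e c h a) :> nat.
Proof. by rewrite mxE inordK // ltnS geq_minl. Qed.

Lemma count_mx_eq e c C :
  (count_mx e c == C) =
  [forall h, forall a, minn Nb (label_count e c h a) == C h a].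
Proof.
apply/eqP/forallP => [<- h | countC].
  by apply/forallP => a; rewrite count_mxE.
apply/matrixP => h a; apply/val_inj; rewrite /= count_mxE.
exact/eqP/(forallP (countC h)).
Qed.

Variables (i j : 'I_k).
Hypothesis neq_ij : i != j.
Let neq_ji : j != i. Proof. by rewrite eq_sym. Qed.

Lemma label_count_rename_src e c a : label_count (CRename i j e) c i a = 0.
Proof.
apply/eqP; rewrite cards_eq0; apply/eqP/setP => v; rewrite !inE /=.
by case: (cw_label e v =P i) => [_ | /eqP/negbTE ->]; rewrite ?(negbTE neq_ji) ?andbF.
Qed.

Lemma label_count_rename_dst e c a :
  label_count (CRename i j e) c j a = label_count e c i a + label_count e c j a.
Proof.
rewrite /label_count -(cardsID [set v | cw_label e v == i]).
congr (_ + _); apply: eq_card => v; rewrite !inE /=.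
  by case: (cw_label e v =P i); rewrite ?eqxx ?andbT ?andbF.
by case: (cw_label e v =P i) => [-> | _]; rewrite ?(negbTE neq_ij) ?andbF.
Qed.

Lemma label_count_rename_other e c h a : h != i -> h != j ->
  label_count (CRename i j e) c h a = label_count e c h a.
Proof.
move=> neq_hi neq_hj; apply: eq_card => v; rewrite !inE /=.
case: (cw_label e v =P i) => [-> | _] //.
by rewrite ![_ == h]eq_sym (negbTE neq_hj) (negbTE neq_hi) !andbF.
Qed.

Definition relabel_compatible (C Ce : 'M['I_Nb.+1]_(k, q)) : bool :=
  [forall a, (C j a : nat) == minn Nb (Ce i a + Ce j a)] &&
  [forall h, forall a, (h != i) && (h != j) ==> (Ce h a == C h a)].

Lemma count_mx_rename_eq e c C :
  (count_mx (CRename i j e) c == C) =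
  [forall a, C i a == 0 :> nat] && relabel_compatible C (count_mx e c).
Proof.
rewrite count_mx_eq.
apply/forallP/and3P => [countC | [/forallP Ci0 /forallP Cj /forallP Ch] h].
  have countCE h a : minn Nb (label_count (CRename i j e) c h a) = C h a.
    exact/eqP/(forallP (countC h)).
  split; apply/forallP.
  - by move=> a; rewrite -countCE label_count_rename_src minn0.
  - by move=> a; rewrite -countCE label_count_rename_dst !count_mxE; apply/eqP; lia.
  move=> h; apply/forallP => a; apply/implyP => /andP[neq_hi neq_hj].
  by apply/eqP/val_inj; rewrite /= count_mxE -countCE label_count_rename_other.
apply/forallP => a; have [-> | neq_hi] := eqVneq h i.
  by rewrite label_count_rename_src minn0 (eqP (Ci0 a)).
have [-> | neq_hj] := eqVneq h j.
  by rewrite label_count_rename_dst (eqP (Cj a)) !count_mxE; apply/eqP; lia.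
move/forallP/(_ a)/implyP: (Ch h); rewrite neq_hi neq_hj => /(_ isT)/eqP <-.
by rewrite label_count_rename_other // count_mxE.
Qed.

End LabelCounts.

Section RenameColorings.
Variables (V : finType) (k q Nb : nat).
Variables (L : V -> {set 'I_q}) (check : V -> 'I_q -> ('I_q -> nat) -> bool).
Implicit Types (e : cwexp V k) (c : {ffun V -> 'I_q}) (C N : 'M['I_Nb.+1]_(k, q)).

Lemma is_CN_coloring_count e C N c :
  is_CN_coloring L check e C N c =
  (count_mx Nb e c == C) && is_CN_coloring L check e (count_mx Nb e c) N c.
Proof.
rewrite /is_CN_coloring -!count_mx_eq eqxx.
by case: (count_mx Nb e c == C); rewrite ?andbF.
Qed.

Variables (i j : 'I_k).
Hypothesis neq_ij : i != j.

Definition relabel_rows N : 'M['I_Nb.+1]_(k, q) :=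
  \matrix_(h, a) (if h == i then N j a else N h a).

Lemma is_CN_coloring_rename e C N c :
  is_CN_coloring L check (CRename i j e) C N c =
  [&& [forall a, C i a == 0 :> nat], relabel_compatible i j C (count_mx Nb e c)
    & is_CN_coloring L check e (count_mx Nb e c) (relabel_rows N) c].
Proof.
have relabel_row v : N (cw_label (CRename i j e) v) = relabel_rows N (cw_label e v).
  by apply: functional_extensionality => a; rewrite mxE /=; case: ifP.
rewrite /is_CN_coloring -!count_mx_eq count_mx_rename_eq // eqxx.
set CR := [forall v, _ ==> check _ _ _]; set CE := [forall v, _ ==> check _ _ _].
have -> : CR = CE by apply: eq_forallb => v; rewrite relabel_row.
by rewrite /= -andbA andbCA; congr (_ && _); rewrite andbCA.
Qed.

End RenameColorings.

Theorem lemma5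
  (d : Order.disp_t) (W : orderType d) (Error : W) (op : W -> W -> W) (one : W)
  (HW : is_weight_set Error op one)
  (V : finType) (E : rel V) (Esym : symmetric E) (Eirr : irreflexive E)
  (q : nat) (L : V -> {set 'I_q}) (HL : forall v, L v != set0)
  (w : V -> 'I_q -> W) (Hw : forall v a, a \in L v -> w v a != Error)
  (check : V -> 'I_q -> ('I_q -> nat) -> bool)
  (Nb : nat) (HNb : 1 <= Nb <= #|V|)
  (Hcheck : forall v a (n : 'I_q -> nat),
      check v a n = check v a (fun b => minn Nb (n b)))
  (k : nat) (eG : cwexp V k) (HeG : cw_expression_of E eG)
  (i j : 'I_k) (e : cwexp V k) (Hsub : subexp (CRename i j e) eG)
  (C N : 'M['I_Nb.+1]_(k, q)) :
  let Ne : 'M['I_Nb.+1]_(k, q) :=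
    (\matrix_(h, a) (if h == i then N j a else N h a))%R in
  let lam := lambda Error op one L w check in
  ((forall a, (C i a : nat) = 0) ->
     lam (CRename i j e) C N =
     \big[Order.min/Error]_(Ce : 'M['I_Nb.+1]_(k, q) |
          [forall a, (C j a : nat) == minn Nb (Ce i a + Ce j a)] &&
          [forall h, forall a, (h != i) && (h != j) ==> (Ce h a == C h a)])
       lam e Ce Ne)
  /\
  (~ (forall a, (C i a : nat) = 0) -> lam (CRename i j e) C N = Error).
Proof.
move=> Ne lam.
have [neq_ij _] : i != j /\ cw_wf e.
  by case: HeG => wf_eG *; exact: subexp_wf Hsub wf_eG.
have le_Error : forall x : W, (x <= Error)%O by case: HW.
split=> [Ci0 | Ci_neq0]; rewrite /lam /lambda.
  apply: (bigmin_cover le_Error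
            (R := fun Ce c => is_CN_coloring L check e Ce Ne c)) => [c | Ce c compat].
    by rewrite is_CN_coloring_rename // => /and3P[_ compat col]; exists (count_mx Nb e c).
  rewrite is_CN_coloring_count is_CN_coloring_rename // => /andP[/eqP-> col].
  by apply/and3P; split=> //; apply/forallP => a; rewrite Ci0.
rewrite big_pred0 // => c; rewrite is_CN_coloring_rename //.
by case: forallP => // Ci0; case: Ci_neq0 => a; exact/eqP/Ci0.
Qed.
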